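(* Let $r\ne0$ be an integer, $K$ a field of characteristic not dividing $2r$, and $E_r$ the elliptic curve $y^2=x^3-r^{-1}x$, embedded in $\mathbb{P}^2$ as $x^3-rxz^2-ry^2z=0$, the affine point $(x,y)$ corresponding to $(x:y:r^{-1})$ and $O=(0:1:0)$. Let $Q=(a,b)$ be an affine $3$-torsion point of $E_r$, and let $A\in\mathrm{GL}_3(K)$ be such that the projective transformation $\bar A$ of $\mathbb{P}^2$ (acting on column vectors of homogeneous coordinates $(x,y,z)^{\mathrm T}$) maps $E_r$ into itself and restricts to the translation $\tau_Q:P\mapsto P+Q$ on $E_r$. Then there exists $\nu\in K^\times$ such that, up to multiplication by a nonzero scalar, $$A=\begin{pmatrix} rab+2ab\nu & ra^2 & -2ra^2b\nu\\ (-3r-2\nu)b^2 & rab & 2rab^2\nu\\ (1-2\nu a^2)b & a & 2ra^3b\nu\end{pmatrix}.$$ *)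

From HB Require Import structures.
From mathcomp Require Import all_boot all_order all_algebra.
Set Implicit Arguments. Unset Strict Implicit. Unset Printing Implicit Defensive.
Import Order.TTheory GRing.Theory Num.Theory.
Local Open Scope ring_scope.

(* Points of the Weierstrass curve  y^2 = x^3 + alpha x  over a field L:
   None is the point at infinity O, Some (x, y) an affine point. *)
Definition ec_on (L : fieldType) (alpha : L) (P : option (L * L)) : bool :=
  match P with
  | None => true
  | Some (x, y) => y ^+ 2 == x ^+ 3 + alpha * x
  end.

(* Chord-and-tangent group law (char L <> 2), neutral element O = None. *)
Definition ec_add (L : fieldType) (alpha : L) (P Q : option (L * L)) :
    option (L * L) :=
  match P, Q with
  | None, _ => Q
  | _, None => P
  | Some (x1, y1), Some (x2, y2) =>
      if x1 == x2 then
        if y1 == - y2 then None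
        else
          let l := (3%:R * x1 ^+ 2 + alpha) / (2%:R * y1) in
          let x3 := l ^+ 2 - x1 - x2 in
          Some (x3, l * (x1 - x3) - y1)
      else
        let l := (y2 - y1) / (x2 - x1) in
        let x3 := l ^+ 2 - x1 - x2 in
        Some (x3, l * (x1 - x3) - y1)
  end.

Definition alpha_r (L : fieldType) (r : int) : L := - (r%:~R)^-1.

(* Homogeneous coordinates (column vector) of a point of E_r in P^2 for the
   model x^3 - r x z^2 - r y^2 z = 0: (x,y) |-> (x : y : r^{-1}), O |-> (0:1:0). *)
Definition coords (L : fieldType) (r : int) (P : option (L * L)) : 'cV[L]_3 :=
  match P with
  | None => \col_(i < 3) (if i == 1 :> nat then 1 else 0)
  | Some (x, y) => \col_(i < 3) nth 0 [:: x; y; (r%:~R)^-1] i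
  end.

Definition proj_eq (L : fieldType) (v w : 'cV[L]_3) : Prop :=
  exists c : L, c != 0 /\ v = c *: w.

Definition mx3 (K : fieldType) (a11 a12 a13 a21 a22 a23 a31 a32 a33 : K)
  : 'M[K]_3 :=
  \matrix_(i < 3, j < 3)
     nth 0 (nth [::] [:: [:: a11; a12; a13]; [:: a21; a22; a23];
                         [:: a31; a32; a33]] i) j.

Definition Amat (K : fieldType) (r : int) (a b nu : K) : 'M[K]_3 :=
  let R : K := r%:~R in
  mx3 (R * a * b + 2%:R * a * b * nu) (R * a ^+ 2) (- (2%:R * R * a ^+ 2 * b * nu))
      ((- (3%:R * R) - 2%:R * nu) * b ^+ 2) (R * a * b) (2%:R * R * a * b ^+ 2 * nu)
      ((1 - 2%:R * nu * a ^+ 2) * b) a (2%:R * R * a ^+ 3 * b * nu).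

(* Evaluate the projective map at four points of E_r whose translates by Q are
   explicit, T = (0, 0) being the 2-torsion point: O |-> Q, -Q |-> O,
   T |-> T + Q and T - Q |-> T.  The images of O and T fix the second and
   third columns of A up to scalars c1 and c3; those of -Q and T - Q determine
   the first column and force c3 in terms of c1.  This gives the claimed
   matrix with nu = - r / (1 + r a^2) and scalar c1 / (r a).  That Q has order 3 is only
   used to see that a <> 0 and 1 + r a^2 <> 0, so that T + Q and T - Q are
   affine. *)

From HB Require Import structures.
From mathcomp Require Import all_boot all_order all_algebra.
From mathcomp Require Import ring.
Import GRing.Theory Num.Theory.
Local Open Scope ring_scope.

Definition col3 {K : fieldType} (x y z : K) : 'cV[K]_3 :=
  \col_(i < 3) nth 0 [:: x; y; z] i.

Section Mx3.
Context {K : fieldType}.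
Implicit Types (x y z u v w c : K) (M : 'M[K]_3).

Variant mx3_spec M : Prop :=
  Mx3Spec m11 m12 m13 m21 m22 m23 m31 m32 m33 of
    M = mx3 m11 m12 m13 m21 m22 m23 m31 m32 m33.

Lemma mx3P M : mx3_spec M.
Proof.
apply: (@Mx3Spec _ (M 0 0) (M 0 1) (M 0 2) (M 1 0) (M 1 1) (M 1 2)
                   (M 2 0) (M 2 1) (M 2 2)).
apply/matrixP => i j; rewrite mxE.
case: i j => [[|[|[|?]]] ?] [[|[|[|?]]] ?] //=.
all: by congr (M _ _); apply: val_inj.
Qed.

Lemma mulmx3_col3 m11 m12 m13 m21 m22 m23 m31 m32 m33 x y z :
  mx3 m11 m12 m13 m21 m22 m23 m31 m32 m33 *m col3 x y z =
  col3 (m11 * x + m12 * y + m13 * z) (m21 * x + m22 * y + m23 * z)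
       (m31 * x + m32 * y + m33 * z).
Proof.
apply/matrixP => i j; rewrite !mxE !big_ord_recl big_ord0 addr0 !mxE addrA.
by case: i => [[|[|[|?]]] ?].
Qed.

Lemma scale_col3 c x y z : c *: col3 x y z = col3 (c * x) (c * y) (c * z).
Proof. by apply/matrixP => i j; rewrite !mxE; case: i => [[|[|[|?]]] ?]. Qed.

Lemma scale_mx3 c m11 m12 m13 m21 m22 m23 m31 m32 m33 :
  c *: mx3 m11 m12 m13 m21 m22 m23 m31 m32 m33 =
  mx3 (c * m11) (c * m12) (c * m13) (c * m21) (c * m22) (c * m23)
      (c * m31) (c * m32) (c * m33).
Proof.
apply/matrixP => i j; rewrite !mxE.
by case: i j => [[|[|[|?]]] ?] [[|[|[|?]]] ?].
Qed.

Lemma col3_inj x y z u v w :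
  col3 x y z = col3 u v w -> [/\ x = u, y = v & z = w].
Proof.
move=> e; have ei i := congr1 (fun t : 'cV[K]_3 => t i 0) e.
by move: (ei ord0) (ei (lift ord0 ord0)) (ei ord_max); rewrite !mxE.
Qed.

Lemma proj_eq_mx3_col3 m11 m12 m13 m21 m22 m23 m31 m32 m33 x y z u v w :
  proj_eq (mx3 m11 m12 m13 m21 m22 m23 m31 m32 m33 *m col3 x y z)
          (col3 u v w) ->
  exists2 c, c != 0 & [/\ m11 * x + m12 * y + m13 * z = c * u,
                          m21 * x + m22 * y + m23 * z = c * v
                        & m31 * x + m32 * y + m33 * z = c * w].
Proof.
by case=> c [c_neq0]; rewrite mulmx3_col3 scale_col3 => /col3_inj; exists c.
Qed.

End Mx3.

Lemma coords_None (K : fieldType) (r : int) :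
  coords r None = col3 0 1 0 :> 'cV[K]_3.
Proof. by apply/matrixP => i j; rewrite !mxE; case: i => [[|[|[|?]]] ?]. Qed.

Lemma eq_by_combination {K : comRingType} {x y l r : K} (k : K) :
  l = r -> x - y = k * (l - r) -> x = y.
Proof. by move=> -> /eqP; rewrite subrr mulr0 subr_eq0 => /eqP. Qed.

Section WeierstrassPoints.
Context {K : fieldType} {alpha a b : K}.
Hypotheses (two_neq0 : (2 : K) != 0) (alpha_neq0 : alpha != 0).
Hypothesis onQ : b ^+ 2 = a ^+ 3 + alpha * a.
Local Notation Q := (Some (a, b)).
Local Notation add := (ec_add alpha).

(* The 3-division polynomial vanishes at a. *)
Lemma three_torsion_eq : add (add Q Q) Q = None ->
  alpha ^+ 2 = 3 * a ^+ 4 + 6 * alpha * a ^+ 2.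
Proof.
rewrite /ec_add eqxx; case: eqP => [//|b_neq_opp].
have b_neq0 : b != 0 by apply: contra_not_neq b_neq_opp => ->; rewrite oppr0.
case: eqP => [x2Q _|//].
have slope : (3 * a ^+ 2 + alpha) ^+ 2 = 12 * a * b ^+ 2.
  apply: (eq_by_combination (4 * b ^+ 2) x2Q); field.
  by rewrite b_neq0 two_neq0.
by apply: (eq_by_combination 1 slope); rewrite onQ; ring.
Qed.

Lemma three_torsion_nondegenerate : add (add Q Q) Q = None ->
  a != 0 /\ a ^+ 2 != alpha.
Proof.
move=> /three_torsion_eq tors; split.
  apply: contraNneq alpha_neq0 => a0.
  by rewrite -sqrf_eq0 tors a0; apply/eqP; ring.
apply/eqP => a2; rewrite -a2 in tors.
have : 2 * 2 * 2 * (a ^+ 2) ^+ 2 = 0.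
  by apply: (eq_by_combination (-1) tors); ring.
by apply/eqP; rewrite a2 !mulf_eq0 (negbTE two_neq0) (negbTE alpha_neq0).
Qed.

Hypothesis a_neq0 : a != 0.
Local Notation T := (Some (0, 0)).
Local Notation T_sub_Q := (Some (alpha / a, alpha * b / a ^+ 2)).

Lemma add_T_Q : add T Q = Some (alpha / a, - (alpha * b / a ^+ 2)).
Proof.
rewrite /ec_add eq_sym (negbTE a_neq0); congr (Some (_, _)).
  by apply: (eq_by_combination (a ^- 2) onQ); field.
by apply: (eq_by_combination (- b / a ^+ 3) onQ); field.
Qed.

Lemma on_T_sub_Q : ec_on alpha T_sub_Q.
Proof.
by apply/eqP; apply: (eq_by_combination (alpha ^+ 2 / a ^+ 4) onQ); field.
Qed.

Lemma add_T_sub_Q_Q : a ^+ 2 != alpha -> add T_sub_Q Q = T.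
Proof.
move=> a2_neq; rewrite /ec_add.
have -> : (alpha / a == a) = false.
  apply: contraNF a2_neq => /eqP x_eq.
  by apply/eqP; apply: (eq_by_combination (- a) x_eq); field.
have a2_sub : a ^+ 2 - alpha != 0 by rewrite subr_eq0.
congr (Some (_, _)).
  by apply: (eq_by_combination (a ^- 2) onQ); field; rewrite a_neq0 a2_sub.
by apply: (eq_by_combination (- b / a ^+ 3) onQ); field; rewrite a_neq0 a2_sub.
Qed.

End WeierstrassPoints.

Section TranslationMatrix.
Context {K : fieldType} {r : int} {a b : K}.
Local Notation R := (r%:~R : K).
Local Notation alpha := (alpha_r K r).
Hypotheses (R_neq0 : R != 0) (a_neq0 : a != 0) (a2_neq : a ^+ 2 != alpha).

Lemma translation_mx_eq (M : 'M[K]_3) :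
  proj_eq (M *m coords r None) (coords r (Some (a, b))) ->
  proj_eq (M *m coords r (Some (a, - b))) (coords r None) ->
  proj_eq (M *m coords r (Some (0, 0)))
          (coords r (Some (alpha / a, - (alpha * b / a ^+ 2)))) ->
  proj_eq (M *m coords r (Some (alpha / a, alpha * b / a ^+ 2)))
          (coords r (Some (0, 0))) ->
  exists nu : K, nu != 0 /\ exists c : K, c != 0 /\ M = c *: Amat r a b nu.
Proof.
have [m11 m12 m13 m21 m22 m23 m31 m32 m33 ->] := mx3P M; rewrite coords_None.
move=> /proj_eq_mx3_col3 [c1 c1_neq0 [O1 O2 O3]].
move=> /proj_eq_mx3_col3 [c2 _ [negQ1 _ negQ3]].
move=> /proj_eq_mx3_col3 [c3 _ [T1 T2 T3]].
move=> /proj_eq_mx3_col3 [c4 _ [TQ1 TQ2 _]].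
rewrite /alpha_r in T1 T2 TQ1 TQ2.
have Ra2_neq0 : 1 + R * a ^+ 2 != 0.
  apply: contraNneq a2_neq => Ra2; apply/eqP; rewrite /alpha_r.
  by apply: (eq_by_combination R^-1 Ra2); field.
have nz := (a_neq0, R_neq0, Ra2_neq0).
have e12 : m12 = c1 * a by rewrite -O1; ring.
have e22 : m22 = c1 * b by rewrite -O2; ring.
have e32 : m32 = c1 / R by rewrite -O3; ring.
have e13 : m13 = - c3 / a.
  by apply: (eq_by_combination R T1); field; rewrite ?nz.
have e23 : m23 = c3 * b / a ^+ 2.
  by apply: (eq_by_combination R T2); field; rewrite ?nz.
have e33 : m33 = c3.
  by apply: (eq_by_combination R T3); field; rewrite ?nz.
have e11 : m11 = (b * m12 - m13 / R) / a.
  by apply: (eq_by_combination a^-1 negQ1); field; rewrite ?nz.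
have e31 : m31 = (b * m32 - m33 / R) / a.
  by apply: (eq_by_combination a^-1 negQ3); field; rewrite ?nz.
have e21 : m21 = a * m23 - b * m22 / a.
  by apply: (eq_by_combination (- R * a) TQ2); field; rewrite ?nz.
rewrite e11 e12 e13 in TQ1.
have ec3 : c3 = - 2 * R * a ^+ 2 * b * c1 / (1 + R * a ^+ 2).
  apply: (eq_by_combination (- R ^+ 2 * a ^+ 3 / (1 + R * a ^+ 2)) TQ1).
  by field; rewrite ?nz.
exists (- R / (1 + R * a ^+ 2)); split.
  by rewrite mulf_neq0 ?oppr_eq0 ?invr_eq0.
exists (c1 / (R * a)); split; first by rewrite mulf_neq0 ?invr_eq0 ?mulf_neq0.
rewrite scale_mx3 e11 e12 e13 e21 e22 e23 e31 e32 e33 ec3.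
by congr mx3; field; rewrite ?nz.
Qed.

End TranslationMatrix.

Theorem lemma3p9 (K : fieldType) (r : int) (a b : K) (A : 'M[K]_3) :
  r != 0 ->
  ((2 * r)%:~R : K) != 0 ->
  ec_on (alpha_r K r) (Some (a, b)) ->
  ec_add (alpha_r K r) (ec_add (alpha_r K r) (Some (a, b)) (Some (a, b)))
         (Some (a, b)) = None ->
  A \in unitmx ->
  (forall (L : fieldType) (f : {rmorphism K -> L}) (P : option (L * L)),
      ec_on (alpha_r L r) P ->
      proj_eq (map_mx f A *m coords r P)
              (coords r (ec_add (alpha_r L r) P (Some (f a, f b))))) ->
  exists nu : K, nu != 0 /\
    exists c : K, c != 0 /\ A = c *: Amat r a b nu.
Proof.
move=> _ two_r_neq0 /eqP onQ torsQ _ translA.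
have {}translA P := translA K idfun P; rewrite map_mx_id // in translA.
have [two_neq0 R_neq0] : (2 : K) != 0 /\ (r%:~R : K) != 0.
  by apply/andP; rewrite -negb_or -mulf_eq0 -[2]/(2%:~R) -intrM.
have alpha_neq0 : alpha_r K r != 0 by rewrite oppr_eq0 invr_eq0.
have [a_neq0 a2_neq] :=
  three_torsion_nondegenerate two_neq0 alpha_neq0 onQ torsQ.
apply: translation_mx_eq => //.
- exact: translA None isT.
- by have := translA (Some (a, - b)); rewrite /= sqrrN onQ !eqxx => /(_ isT).
- have on_T : ec_on (alpha_r K r) (Some (0, 0)) by apply/eqP; ring.
  by have := translA _ on_T; rewrite add_T_Q.
- by have := translA _ (on_T_sub_Q onQ a_neq0); rewrite add_T_sub_Q_Q.
Qed.
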